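(* Let $q$ be an odd prime power and $d\ge 2$. Let $V$ be a $(2d+1)$-dimensional vector space over $\mathbb{F}_q$ with basis $z,e_0,f_0,x,y,e_1,f_1,\dots,e_{d-2},f_{d-2}$ and nondegenerate symmetric bilinear form $\beta$ with $V=\langle z\rangle\perp\langle e_0,f_0\rangle\perp\langle x,y\rangle\perp\langle e_1,f_1\rangle\perp\cdots\perp\langle e_{d-2},f_{d-2}\rangle$, $\beta(z,z)=1$, $\beta(e_i,f_i)=1$, $\beta(e_i,e_i)=\beta(f_i,f_i)=0$, and $\langle x,y\rangle$ anisotropic; let $\kappa(v)=\beta(v,v)/2$ and $U=\langle x,y,e_1,f_1,\dots,e_{d-2},f_{d-2}\rangle$. Let $M$ be a maximal (a totally singular $d$-dimensional subspace of $V$). Then $M$ has a basis $b_1,\dots,b_d$ of one of the following forms, where $u_1,\dots,u_d\in U$ and $\lambda,\mu\in\mathbb{F}_q$: (i) $b_1=z+u_1$, $b_2=e_0+u_2$, $b_3=f_0+u_3$, $b_i=u_i$ for $4\le i\le d$; (ii) $b_1=z+\lambda f_0+u_1$, $b_2=e_0+\mu f_0+u_2$, $b_i=u_i$ for $3\le i\le d$; (iii) $b_1=z+\lambda e_0+u_1$, $b_2=f_0+u_2$, $b_i=u_i$ for $3\le i\le d$.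
   Context: A subspace is totally singular if $\kappa$ vanishes on all its vectors. *)

From HB Require Import structures.
From mathcomp Require Import all_boot all_order all_algebra.
Set Implicit Arguments. Unset Strict Implicit. Unset Printing Implicit Defensive.
Import GRing.Theory.
Local Open Scope ring_scope.

Section Defs.
Variables (F : fieldType) (V : vectType F).

Definition qf_hyp_seq (e f : nat -> V) (d : nat) : seq V :=
  flatten [seq [:: e i; f i] | i <- iota 1 (d - 2)].

Definition qf_full_basis (z x y : V) (e f : nat -> V) (d : nat) : seq V :=
  [:: z; e 0%N; f 0%N; x; y] ++ qf_hyp_seq e f d.

Definition qf_Usp (x y : V) (e f : nat -> V) (d : nat) : {vspace V} :=
  <<[:: x; y] ++ qf_hyp_seq e f d>>%VS.

Definition qf_blocks (z x y : V) (e f : nat -> V) (d : nat) : seq {vspace V} :=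
  [:: <[z]>%VS; <<[:: e 0%N; f 0%N]>>%VS; <<[:: x; y]>>%VS] ++
  [seq <<[:: e i; f i]>>%VS | i <- iota 1 (d - 2)].

Definition qf_orth (beta : V -> V -> F) (A B : {vspace V}) : Prop :=
  forall a b, a \in A -> b \in B -> beta a b = 0.

Definition qf_bilin_form (beta : V -> V -> F) : Prop :=
  (forall a u v w, beta (a *: u + v) w = a * beta u w + beta v w) /\
  (forall a u v w, beta w (a *: u + v) = a * beta w u + beta w v).

Definition qf_symm_form (beta : V -> V -> F) : Prop :=
  forall u v, beta u v = beta v u.

Definition qf_nondegenerate (beta : V -> V -> F) : Prop :=
  forall v, (forall w, beta v w = 0) -> v = 0.

Definition qf_anisotropic (beta : V -> V -> F) (W : {vspace V}) : Prop :=
  forall v, v \in W -> v != 0 -> beta v v != 0.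

Definition qf_kappa (beta : V -> V -> F) (v : V) : F := beta v v / 2%:R.

Definition qf_totally_singular (beta : V -> V -> F) (W : {vspace V}) : Prop :=
  forall v, v \in W -> qf_kappa beta v = 0.

End Defs.

From HB Require Import structures.
From mathcomp Require Import all_boot all_order all_algebra.
From mathcomp Require Import pgroup abelian.
From mathcomp Require Import zify.
Set Implicit Arguments. Unset Strict Implicit. Unset Printing Implicit Defensive.
Import GRing.Theory.
Local Open Scope ring_scope.

(* Let pi0 be the orthogonal projection of V onto <z, e_0, f_0>; its kernel is U.
   The space M :&: ker pi0 is totally isotropic inside U, an anisotropic plane
   plus d - 2 hyperbolic planes, and such a space contains no totally isotropic
   subspace of dimension > d - 2 (peel off one hyperbolic plane at a time).
   Hence pi0(M) has dimension 2 or 3, and lifting a basis of pi0(M) to M and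
   appending a basis of M :&: ker pi0 gives a basis of M.  If dim pi0(M) = 3 we
   lift z, e_0, f_0: form (i).  If it is 2, M is not orthogonal to z (else M
   would be totally isotropic in <x,y> plus d - 1 hyperbolic planes), so some
   m1 in M has beta(m1, z) = 1, and some m2 in M with beta(m2, z) = 0 has
   pi0 m2 outside the line of pi0 m1, i.e. pi0 m2 is a nonzero vector of
   <e_0, f_0>.  Normalising m2 against f_0, or against e_0 when
   beta(m2, f_0) = 0, and clearing that coordinate from m1 gives form (ii),
   resp. (iii). *)

Section BilinearForm.
Variables (F : fieldType) (V : vectType F) (beta : V -> V -> F).
Hypotheses (beta_bilin : qf_bilin_form beta) (beta_sym : qf_symm_form beta).

Lemma beta0l w : beta 0 w = 0.
Proof.
have := beta_bilin.1 1 0 0 w; rewrite scale1r addr0 mul1r.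
by move/(congr1 (fun t => t - beta 0 w)); rewrite addrK subrr.
Qed.

Lemma betaDl u v w : beta (u + v) w = beta u w + beta v w.
Proof. by have := beta_bilin.1 1 u v w; rewrite scale1r mul1r. Qed.

Lemma betaZl a u w : beta (a *: u) w = a * beta u w.
Proof. by have := beta_bilin.1 a u 0 w; rewrite !addr0 beta0l addr0. Qed.

Lemma betaBl u v w : beta (u - v) w = beta u w - beta v w.
Proof. by rewrite -scaleN1r addrC beta_bilin.1 mulN1r addrC. Qed.

Lemma betaDr u v w : beta w (u + v) = beta w u + beta w v.
Proof. by rewrite !(beta_sym w) betaDl. Qed.

Lemma betaBr u v w : beta w (u - v) = beta w u - beta w v.
Proof. by rewrite !(beta_sym w) betaBl. Qed.

Lemma betaZr a u w : beta w (a *: u) = a * beta w u.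
Proof. by rewrite !(beta_sym w) betaZl. Qed.

Lemma beta_suml (I : Type) (r : seq I) (P : pred I) (G : I -> V) w :
  beta (\sum_(i <- r | P i) G i) w = \sum_(i <- r | P i) beta (G i) w.
Proof. exact: (big_morph (beta^~ w) (fun u v => betaDl u v w) (beta0l w)). Qed.

Lemma beta_span_eq0l (s : seq V) w :
  {in s, forall g, beta g w = 0} -> {in <<s>>%VS, forall v, beta v w = 0}.
Proof.
move=> s_w v /(@coord_span _ _ _ (in_tuple s)) ->.
rewrite beta_suml big1 // => i _.
by rewrite betaZl s_w ?mulr0 ?mem_nth.
Qed.

Lemma qf_orth_addvl (A1 A2 B : {vspace V}) :
  qf_orth beta A1 B -> qf_orth beta A2 B -> qf_orth beta (A1 + A2)%VS B.
Proof.
move=> A1B A2B _ b /memv_addP [a1 A1a1 [a2 A2a2 ->]] Bb.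
by rewrite betaDl A1B // A2B // addr0.
Qed.

Lemma qf_orth_sumvl (I : Type) (r : seq I) (P : pred I) (A : I -> {vspace V}) B :
  (forall i, P i -> qf_orth beta (A i) B) ->
  qf_orth beta (\sum_(i <- r | P i) A i)%VS B.
Proof.
move=> AB; elim/big_ind: _ => //; last by move=> A1 A2; apply: qf_orth_addvl.
by move=> a b /[!memv0] /eqP -> _; rewrite beta0l.
Qed.

Lemma beta_lfun_is_linear (w t : V) : linear (fun v => beta v w *: t).
Proof. by move=> a u v; rewrite /= beta_bilin.1 scalerDl scalerA. Qed.

Definition beta_linear (w t : V) : {linear V -> V} :=
  HB.pack (fun v => beta v w *: t)
    (GRing.isLinear.Build _ _ _ _ _ (beta_lfun_is_linear w t)).

Definition beta_lfun (w t : V) : 'End(V) := linfun (beta_linear w t).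

Lemma beta_lfunE w t v : beta_lfun w t v = beta v w *: t.
Proof. by rewrite lfunE. Qed.

Definition totally_isotropic (T : {vspace V}) : Prop := qf_orth beta T T.

Definition hyperbolic_pair (e f : V) : Prop :=
  [/\ beta e f = 1, beta e e = 0 & beta f f = 0].

Lemma totally_singular_isotropic (T : {vspace V}) :
  (2%:R : F) != 0 -> qf_totally_singular beta T -> totally_isotropic T.
Proof.
move=> two_neq0 Tsing.
have iso_diag v : v \in T -> beta v v = 0.
  move=> Tv; have /eqP := Tsing v Tv.
  by rewrite /qf_kappa mulf_eq0 invr_eq0 (negbTE two_neq0) orbF => /eqP.
move=> v w Tv Tw; have := iso_diag _ (rpredD Tv Tw).
rewrite betaDl !betaDr !iso_diag // add0r addr0 (beta_sym w).
by move/eqP; rewrite -mulr2n -mulr_natl mulf_eq0 (negbTE two_neq0) => /eqP.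
Qed.

Lemma dual_free (X Y : seq V) : size X = size Y ->
  (forall i j, (i < size X)%N -> (j < size X)%N -> beta X`_i Y`_j = (i == j)%:R) ->
  free X.
Proof.
move=> sXY XY; apply/(@freeP _ _ _ (in_tuple X)) => k Xk0 j.
have /eqP := congr1 (beta^~ Y`_j) Xk0; rewrite beta0l.
rewrite beta_suml (bigD1 j) //= big1 => [|i /negbTE nij]; last first.
  by rewrite betaZl XY ?ltn_ord // val_eqE nij mulr0.
by rewrite betaZl XY ?eqxx ?mulr1 ?addr0 ?ltn_ord // => /eqP.
Qed.

Definition plane_perp_proj (e f : V) : 'End(V) := (\1 - beta_lfun f e - beta_lfun e f)%VF.

Lemma plane_perp_projE e f v : plane_perp_proj e f v = v - beta v f *: e - beta v e *: f.
Proof. by rewrite !add_lfunE !opp_lfunE id_lfunE !beta_lfunE. Qed.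

Lemma plane_perp_proj_plane e f :
  hyperbolic_pair e f -> {in <<[:: e; f]>>%VS, plane_perp_proj e f =1 (0 : 'End(V))}.
Proof.
move=> [ef1 ee0 ff0]; have fe1 : beta f e = 1 by rewrite beta_sym.
apply/span_lfunP => _ /[!inE] /orP[] /eqP ->; rewrite zero_lfunE plane_perp_projE.
  by rewrite ee0 ef1 scale0r scale1r subr0 subrr.
by rewrite ff0 fe1 scale0r scale1r subr0 subrr.
Qed.

Lemma totally_isotropic_hyp_plane (W T : {vspace V}) (e f : V) :
    hyperbolic_pair e f -> qf_orth beta W <<[:: e; f]>> ->
    (T <= W + <<[:: e; f]>>)%VS -> totally_isotropic T ->
  exists2 T' : {vspace V}, (T' <= W)%VS /\ totally_isotropic T' & (\dim T <= (\dim T').+1)%N.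
Proof.
(* T1 := T :&: e^perp projects along <e, f> onto a totally isotropic T' <= W;
   the kernel of that projection on T1 lies in <[e]>, and e \in T forces T1 = T. *)
move=> ef W_ef sTWH isoT; have [ef1 ee0 _] := ef.
have e_neq0 : e != 0.
  by apply/eqP => e0; move: ef1; rewrite e0 beta0l => /esym/eqP; rewrite oner_eq0.
set g := plane_perp_proj e f; have gE := plane_perp_projE e f.
have g_ef := plane_perp_proj_plane ef.
set T1 := (T :&: lker (beta_lfun e e))%VS.
have T1P v : (v \in T1) = (v \in T) && (beta v e == 0).
  by rewrite memv_cap memv_ker beta_lfunE scaler_eq0 (negbTE e_neq0) orbF.
exists (g @: T1)%VS; first split.
- apply/subvP => _ /memv_imgP [v /[!T1P] /andP [Tv _] ->].
  have /memv_addP [w Ww [h Hh ->]] := subvP sTWH v Tv.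
  have [we wf] : beta w e = 0 /\ beta w f = 0.
    by split; apply: W_ef; rewrite ?memv_span ?inE ?eqxx ?orbT.
  by rewrite linearD /= (g_ef h Hh) zero_lfunE addr0 gE we wf !scale0r !subr0.
- move=> _ _ /memv_imgP [v /[!T1P] /andP [Tv /eqP ve] ->]
    /memv_imgP [w /[!T1P] /andP [Tw /eqP we] ->].
  rewrite !gE ve we !scale0r !subr0 betaBl !betaBr !betaZl !betaZr isoT //.
  by rewrite ve ee0 (beta_sym e) we !mulr0 !subr0.
have dimT1 : (\dim T <= \dim T1 + (e \notin T))%N.
  have [Te | Tne] := boolP (e \in T).
    suff -> : T1 = T by rewrite addn0.
    by apply/capv_idPl/subvP => v Tv; rewrite memv_ker beta_lfunE isoT // scale0r.
  rewrite -(limg_ker_dim (beta_lfun e e) T) -/T1 leq_add2l.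
  rewrite (leq_trans (dimvS (_ : _ <= <[e]>)%VS)) ?dim_vline ?e_neq0 //.
  by apply/subvP => _ /memv_imgP [v _ ->]; rewrite beta_lfunE memvZ ?memv_line.
have dim_kerg : (\dim (T1 :&: lker g) <= (e \in T))%N.
  have kerg_e : (T1 :&: lker g <= <[e]>)%VS.
    apply/subvP => v; rewrite memv_cap T1P memv_ker gE => /andP [/andP [_ /eqP ->]].
    by rewrite scale0r subr0 subr_eq0 => /eqP ->; rewrite memvZ ?memv_line.
  have := dimvS kerg_e; rewrite dim_vline e_neq0 leq_eqVlt ltnS leqn0.
  case/orP => [dim1 | /eqP ->]; last exact: leq0n.
  have /eqP kerg_eq : (T1 :&: lker g == <[e]>)%VS.
    by rewrite eqEdim kerg_e dim_vline e_neq0 (eqP dim1).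
  by have := memv_line e; rewrite -kerg_eq memv_cap T1P (eqP dim1) => /andP [/andP [-> _]].
have := limg_ker_dim g T1; case: (e \in T) dimT1 dim_kerg => /=; lia.
Qed.

Lemma totally_isotropic_dim_le (A T : {vspace V}) (es fs : nat -> V) (k : nat) :
    qf_anisotropic beta A ->
    (forall i, (i < k)%N -> hyperbolic_pair (es i) (fs i)) ->
    (forall i j, (i < k)%N -> (j < k)%N -> i != j ->
       qf_orth beta <<[:: es i; fs i]>> <<[:: es j; fs j]>>) ->
    (forall i, (i < k)%N -> qf_orth beta A <<[:: es i; fs i]>>) ->
    (T <= A + \sum_(i < k) <<[:: es i; fs i]>>)%VS -> totally_isotropic T ->
  (\dim T <= k)%N.
Proof.
move=> anisoA; elim: k T => [|k IHk] T hyp planes_orth A_orth sTA isoT.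
  rewrite leqn0 dimv_eq0 -subv0; apply/subvP => v Tv; rewrite memv0.
  apply/negPn/negP => v_neq0.
  have Av : v \in A by move: (subvP sTA v Tv); rewrite big_ord0 addv0.
  by have := anisoA v Av v_neq0; rewrite isoT ?eqxx.
rewrite big_ord_recr addvA /= in sTA.
have orth_k : qf_orth beta (A + \sum_(i < k) <<[:: es i; fs i]>>) <<[:: es k; fs k]>>.
  apply: qf_orth_addvl; first exact: A_orth.
  apply: qf_orth_sumvl => i _.
  by apply: planes_orth; rewrite ?(ltn_eqF (ltn_ord i)) // ltnS ltnW.
have [T' [sT'A isoT'] dimT] := totally_isotropic_hyp_plane (hyp k (ltnSn k)) orth_k sTA isoT.
apply: leq_trans dimT _; rewrite ltnS; apply: IHk sT'A isoT' => [i ik|i j ik jk|i ik].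
- by apply: hyp; apply: ltnW.
- by apply: planes_orth; apply: ltnW.
- by apply: A_orth; apply: ltnW.
Qed.

End BilinearForm.

Lemma basis_of_lift_cat_ker (F : fieldType) (V W : vectType F) (p : 'Hom(V, W))
    (M : {vspace V}) (bs : seq V) :
    all (mem M) bs -> free (map p bs) -> size bs = \dim (p @: M) ->
  basis_of M (bs ++ vbasis (M :&: lker p)).
Proof.
move=> bsM free_pbs size_bs.
have sbsM : (<<bs>> <= M)%VS by apply/span_subvP => b /(allP bsM).
have img_bs : (p @: <<bs>> = p @: M)%VS.
  apply/eqP; rewrite eqEdim limgS //= limg_span.
  by move/eqP: free_pbs => ->; rewrite size_map size_bs.
rewrite basisEdim size_cat size_tuple size_bs addnC limg_ker_dim leqnn andbT.
apply/subvP => v Mv.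
have /memv_imgP [w bs_w pvw] : p v \in (p @: <<bs>>)%VS by rewrite img_bs memv_img.
rewrite -(subrK w v) addrC span_cat memv_add // (span_basis (vbasisP _)).
by rewrite memv_cap memv_ker linearB /= pvw subrr eqxx rpredB // (subvP sbsM).
Qed.

Lemma odd_card_two_neq0 (F : finFieldType) : odd #|F| -> (2%:R : F) != 0.
Proof.
move=> oddF; apply/negP => two_eq0.
have char2 : (2 \in [pchar F])%N by rewrite inE two_eq0.
have /abelem_pgroup := fin_ring_pchar_abelem char2.
rewrite /pgroup cardsT => /p_natP [k cardF].
have := card_finNzRing_gt1 F; move: oddF; rewrite cardF.
by case: k {cardF} => // k; rewrite expnS oddM.
Qed.

Section NormalForm.
Variables (F : fieldType) (V : vectType F) (beta : V -> V -> F).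
Variables (d : nat) (z x y : V) (e f : nat -> V) (M : {vspace V}).
Hypotheses (beta_bilin : qf_bilin_form beta) (beta_sym : qf_symm_form beta).
Hypothesis d_ge2 : (2 <= d)%N.
Hypothesis full_basis : basis_of fullv (qf_full_basis z x y e f d).
Hypothesis blocks_orth : forall i j, (i < size (qf_blocks z x y e f d))%N ->
  (j < size (qf_blocks z x y e f d))%N -> i != j ->
  qf_orth beta (nth 0%VS (qf_blocks z x y e f d) i) (nth 0%VS (qf_blocks z x y e f d) j).
Hypothesis zz1 : beta z z = 1.
Hypothesis hyp_ef : forall i, (i <= d - 2)%N -> hyperbolic_pair beta (e i) (f i).
Hypothesis aniso_xy : qf_anisotropic beta <<[:: x; y]>>%VS.

Local Notation U := (qf_Usp x y e f d).
Local Notation blocks := (qf_blocks z x y e f d).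
Local Notation plane i := <<[:: e i; f i]>>%VS.

Lemma size_blocks : size blocks = (d - 2).+3.
Proof. by rewrite /qf_blocks size_cat size_map size_iota. Qed.

Definition plane_block (i : nat) : nat := if i is 0 then 1 else i.+2.

Lemma plane_block_lt i : (i <= d - 2)%N -> (plane_block i < size blocks)%N.
Proof. by rewrite size_blocks; case: i. Qed.

Lemma nth_blocks_plane i : (i <= d - 2)%N -> nth 0%VS blocks (plane_block i) = plane i.
Proof.
case: i => [|i] //= lt_i.
by rewrite (nth_map 0%N) ?size_iota ?nth_iota // add1n.
Qed.

Lemma planes_orth i j : (i <= d - 2)%N -> (j <= d - 2)%N -> i != j ->
  qf_orth beta (plane i) (plane j).
Proof.
move=> le_i le_j neq_ij; rewrite -!nth_blocks_plane //.
apply: blocks_orth; rewrite ?plane_block_lt //.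
by move: neq_ij; case: i {le_i} => [|i]; case: j {le_j}.
Qed.

Lemma xy_plane_orth i : (i <= d - 2)%N -> qf_orth beta <<[:: x; y]>> (plane i).
Proof.
move=> le_i; rewrite -nth_blocks_plane //.
change (qf_orth beta (nth 0%VS blocks 2) (nth 0%VS blocks (plane_block i))).
by apply: blocks_orth; rewrite ?plane_block_lt ?size_blocks //; case: i {le_i}.
Qed.

Lemma Usp_sum : U = (<<[:: x; y]>> + \sum_(i < d - 2) plane i.+1)%VS.
Proof.
rewrite /qf_Usp span_cat /qf_hyp_seq -(big_mkord xpredT (fun i => plane i.+1)).
rewrite (iotaDl 1 0) -map_comp /index_iota subn0; congr (_ + _)%VS.
by elim: (iota 0 (d - 2)) => [|i r IHr]; rewrite ?big_nil ?span_nil // big_cons span_cat IHr.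
Qed.

Lemma Usp_orth_blocks_lt2 j : (j < 2)%N -> qf_orth beta U (nth 0%VS blocks j).
Proof.
move=> lt_j2; rewrite Usp_sum; apply: (qf_orth_addvl beta_bilin).
  change (qf_orth beta (nth 0%VS blocks 2) (nth 0%VS blocks j)).
  by apply: blocks_orth; rewrite ?size_blocks // ?(leq_trans lt_j2) // neq_ltn lt_j2 orbT.
apply: (qf_orth_sumvl beta_bilin) => i _; rewrite -nth_blocks_plane ?ltn_ord //.
apply: blocks_orth; rewrite ?size_blocks ?(leq_trans lt_j2) //=.
  by rewrite !ltnS ltn_ord.
by rewrite neq_ltn (leq_trans lt_j2) ?orbT.
Qed.

Lemma Usp_orth_ze0f0 u w : u \in U -> w \in [:: z; e 0%N; f 0%N] -> beta u w = 0.
Proof.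
move=> Uu /[!inE] /or3P [] /eqP ->.
- exact: (Usp_orth_blocks_lt2 (j := 0) isT Uu (memv_line z)).
- by apply: (Usp_orth_blocks_lt2 (j := 1) isT Uu); rewrite memv_span ?inE ?eqxx.
- by apply: (Usp_orth_blocks_lt2 (j := 1) isT Uu); rewrite memv_span ?inE ?eqxx ?orbT.
Qed.

Lemma beta_ze0f0 :
  [/\ beta z (e 0%N) = 0, beta z (f 0%N) = 0, beta (e 0%N) (f 0%N) = 1,
      beta (e 0%N) (e 0%N) = 0 & beta (f 0%N) (f 0%N) = 0].
Proof.
have [ef1 ee0 ff0] := hyp_ef (leq0n _).
have z_plane0 : qf_orth beta (nth 0%VS blocks 0) (nth 0%VS blocks 1).
  by apply: blocks_orth; rewrite ?size_blocks.
by split; rewrite // z_plane0 ?memv_line // memv_span // !inE eqxx ?orbT.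
Qed.

Definition pi0 : 'End(V) :=
  (beta_lfun beta_bilin z z + beta_lfun beta_bilin (f 0%N) (e 0%N)
   + beta_lfun beta_bilin (e 0%N) (f 0%N))%R.

Lemma pi0E v : pi0 v = beta v z *: z + beta v (f 0%N) *: e 0%N + beta v (e 0%N) *: f 0%N.
Proof. by rewrite !add_lfunE !beta_lfunE. Qed.

Lemma pi0_Usp u : u \in U -> pi0 u = 0.
Proof.
move=> Uu; rewrite pi0E !Usp_orth_ze0f0 // ?inE ?eqxx ?orbT //.
by rewrite !scale0r !addr0.
Qed.

Lemma pi0_id : {in <<[:: z; e 0%N; f 0%N]>>%VS, forall w, pi0 w = w}.
Proof.
have [ze0 zf0 ef1 ee0 ff0] := beta_ze0f0.
have fe1 : beta (f 0%N) (e 0%N) = 1 by rewrite beta_sym.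
suff : {in <<[:: z; e 0%N; f 0%N]>>%VS, pi0 =1 \1%VF}.
  by move=> pi0_id w /pi0_id ->; rewrite id_lfunE.
apply/span_lfunP => _ /[!inE] /or3P [] /eqP ->.
all: rewrite id_lfunE pi0E ?zz1 ?ze0 ?zf0 ?ef1 ?ee0 ?ff0 ?fe1 ?(beta_sym _ z) ?ze0 ?zf0.
all: by rewrite !scale0r scale1r ?addr0 ?add0r.
Qed.

Lemma pi0_ze0f0 v : pi0 v \in <<[:: z; e 0%N; f 0%N]>>%VS.
Proof. by rewrite pi0E !rpredD // rpredZ // memv_span // !inE eqxx ?orbT. Qed.

Lemma subr_pi0_Usp v : v - pi0 v \in U.
Proof.
have : v \in <<qf_full_basis z x y e f d>>%VS by rewrite (span_basis full_basis) memvf.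
rewrite [qf_full_basis _ _ _ _ _ _]
  (_ : _ = [:: z; e 0%N; f 0%N] ++ ([:: x; y] ++ qf_hyp_seq e f d)) //.
rewrite span_cat => /memv_addP [w ze0f0_w [u Uu ->]].
by rewrite linearD /= pi0_id // pi0_Usp // addr0 addrAC subrr add0r.
Qed.

Lemma beta_pi0 v w : w \in [:: z; e 0%N; f 0%N] -> beta (pi0 v) w = beta v w.
Proof.
move=> ze0f0_w; have := Usp_orth_ze0f0 (subr_pi0_Usp v) ze0f0_w.
by rewrite (betaBl beta_bilin) => /eqP; rewrite subr_eq0 => /eqP.
Qed.

Lemma mem_perp_z v :
  beta v z = 0 -> v \in (<<[:: x; y]>> + \sum_(i < (d - 2).+1) plane i)%VS.
Proof.
move=> vz0; rewrite big_ord_recl /= addvA [(_ + plane 0)%VS]addvC -addvA.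
rewrite (_ : \sum_(i < d - 2) _ = \sum_(i < d - 2) plane i.+1)%VS // -Usp_sum.
rewrite -(subrK (pi0 v) v) addrC memv_add ?subr_pi0_Usp // pi0E vz0 scale0r add0r.
by rewrite rpredD ?rpredZ ?memv_span // !inE eqxx ?orbT.
Qed.

Hypothesis isoM : totally_isotropic beta M.
Hypothesis dimM : \dim M = d.

Lemma dim_ker_pi0_M : (\dim (M :&: lker pi0) <= d - 2)%N.
Proof.
apply: (totally_isotropic_dim_le beta_bilin beta_sym (es := fun i => e i.+1)
          (fs := fun i => f i.+1) aniso_xy) => [i lt_i|i j lt_i lt_j neq_ij|i lt_i||].
- exact: hyp_ef.
- exact: planes_orth.
- exact: xy_plane_orth.
- rewrite -Usp_sum; apply/subvP => v; rewrite memv_cap memv_ker => /andP [_ /eqP pi0v].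
  by have := subr_pi0_Usp v; rewrite pi0v subr0.
- by move=> v w /[!memv_cap] /andP [Mv _] /andP [Mw _]; apply: isoM.
Qed.

Lemma dim_img_pi0_M : (2 <= \dim (pi0 @: M) <= 3)%N.
Proof.
have dim_le3 : (\dim (pi0 @: M) <= 3)%N.
  apply: leq_trans (dim_span [:: z; e 0%N; f 0%N]); apply: dimvS.
  by apply/subvP => _ /memv_imgP [v _ ->]; apply: pi0_ze0f0.
by have := limg_ker_dim pi0 M; have := dim_ker_pi0_M; rewrite dim_le3 dimM andbT; lia.
Qed.

Lemma exists_beta_z1 : exists2 m, m \in M & beta m z = 1.
Proof.
suff [m Mm mz] : exists2 m, m \in M & beta m z != 0.
  by exists ((beta m z)^-1 *: m); rewrite ?rpredZ // (betaZl beta_bilin) mulVf.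
have [/hasP [m /vbasis_mem Mm mz] | /hasPn M_perp_z] :=
  boolP (has (fun m => beta m z != 0) (vbasis M)).
  by exists m.
have : (\dim M <= (d - 2).+1)%N.
  apply: (totally_isotropic_dim_le beta_bilin beta_sym aniso_xy) => [i|i j|i||] //.
  - by rewrite ltnS; apply: hyp_ef.
  - by rewrite !ltnS; apply: planes_orth.
  - by rewrite ltnS; apply: xy_plane_orth.
  apply/subvP => v; rewrite -{1}(span_basis (vbasisP M)) => Mv; apply: mem_perp_z.
  by apply: (beta_span_eq0l beta_bilin _ Mv) => m /M_perp_z /negPn /eqP.
by rewrite dimM; lia.
Qed.

Lemma lift_basis (bs : seq V) :
    all (mem M) bs -> free (map pi0 bs) -> size bs = \dim (pi0 @: M) ->
  exists b u : nat -> V,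
    [/\ basis_of M [seq b i | i <- iota 1 d], forall i, u i \in U,
        forall i, (size bs < i <= d)%N -> b i = u i
      & forall i, (0 < i <= size bs)%N -> b i = pi0 bs`_i.-1 + u i].
Proof.
move=> bsM free_pbs size_bs; set K := (M :&: lker pi0)%VS.
set bK := bs ++ vbasis K.
have size_bK : size bK = d by rewrite size_cat size_tuple size_bs addnC limg_ker_dim dimM.
exists (fun i => bK`_i.-1), (fun i => bK`_i.-1 - pi0 bK`_i.-1); split.
- rewrite -size_bK (iotaDl 1 0) -map_comp (map_nth_iota0 _ (leqnn _)) take_size.
  exact: basis_of_lift_cat_ker.
- by move=> i; apply: subr_pi0_Usp.
- move=> i /andP [lt_bs_i le_id]; rewrite nth_cat ltnNge -ltnS prednK ?lt_bs_i //=; last first.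
    exact: leq_ltn_trans lt_bs_i.
  have /[!memv_cap] /andP [_] : (vbasis K)`_(i.-1 - size bs) \in K.
    apply/vbasis_mem/mem_nth; rewrite size_tuple.
    by move: size_bK; rewrite size_cat size_tuple; lia.
  by rewrite memv_ker => /eqP ->; rewrite subr0.
- move=> i /andP [lt0i le_i_bs]; rewrite nth_cat prednK // le_i_bs.
  by rewrite addrC subrK.
Qed.

Definition normal_form_basis (b u : nat -> V) : Prop :=
  basis_of M [seq b i | i <- iota 1 d] /\
  (forall i, (1 <= i <= d)%N -> u i \in U) /\
  [\/ [/\ (3 <= d)%N, b 1%N = z + u 1%N, b 2%N = e 0%N + u 2%N,
          b 3%N = f 0%N + u 3%N &
          forall i, (4 <= i <= d)%N -> b i = u i],
      exists lam mu : F,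
        [/\ b 1%N = z + lam *: f 0%N + u 1%N,
            b 2%N = e 0%N + mu *: f 0%N + u 2%N &
            forall i, (3 <= i <= d)%N -> b i = u i]
    | exists lam : F,
        [/\ b 1%N = z + lam *: e 0%N + u 1%N,
            b 2%N = f 0%N + u 2%N &
            forall i, (3 <= i <= d)%N -> b i = u i]].

Lemma free_ze0f0 : free [:: z; e 0%N; f 0%N].
Proof.
have [ze0 zf0 ef1 ee0 ff0] := beta_ze0f0.
apply: (dual_free beta_bilin (Y := [:: z; f 0%N; e 0%N])) => // [[|[|[|i]]]] [|[|[|j]]] //= _ _.
all: by rewrite ?zz1 ?(beta_sym _ z) ?ze0 ?zf0 ?ee0 ?ff0 ?ef1 // beta_sym ef1.
Qed.

Lemma normal_form_dim3 : \dim (pi0 @: M) = 3 -> exists b u, normal_form_basis b u.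
Proof.
move=> dimP3.
have img_pi0 : (pi0 @: M)%VS = <<[:: z; e 0%N; f 0%N]>>%VS.
  apply/eqP; rewrite eqEdim dimP3 dim_span andbT.
  by apply/subvP => _ /memv_imgP [v _ ->]; apply: pi0_ze0f0.
have lift w : w \in [:: z; e 0%N; f 0%N] -> exists2 m, m \in M & w = pi0 m.
  by move=> w_in; apply/memv_imgP; rewrite img_pi0 memv_span.
have [m1 Mm1 z_m1] := lift z (mem_head _ _).
have [m2 Mm2 e_m2] : exists2 m, m \in M & e 0%N = pi0 m by apply: lift; rewrite !inE eqxx orbT.
have [m3 Mm3 f_m3] : exists2 m, m \in M & f 0%N = pi0 m by apply: lift; rewrite !inE eqxx !orbT.
have [] := @lift_basis [:: m1; m2; m3].
- by rewrite /= Mm1 Mm2 Mm3.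
- by rewrite /= -z_m1 -e_m2 -f_m3 free_ze0f0.
- by rewrite dimP3.
move=> b [u [basis_b Uu b_ker b_lift]].
exists b, u; split => //; split => [i _|]; first exact: Uu.
apply: Or31; split; last by move=> i /andP [le4i le_id]; apply: b_ker; rewrite le_id andbT.
- by have := limg_ker_dim pi0 M; rewrite dimP3 dimM; lia.
- by rewrite b_lift //= -z_m1.
- by rewrite b_lift //= -e_m2.
- by rewrite b_lift //= -f_m3.
Qed.

Lemma exists_pi0_notin_line m1 : \dim (pi0 @: M) = 2 -> m1 \in M -> beta m1 z = 1 ->
  exists2 m2, m2 \in M & beta m2 z = 0 /\ pi0 m2 \notin <[pi0 m1]>%VS.
Proof.
move=> dimP2 Mm1 m1z.
have : ~~ (pi0 @: M <= <[pi0 m1]>)%VS.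
  by apply/negP => /dimvS; rewrite dim_vline dimP2; case: (_ != 0).
case/subvPn => _ /memv_imgP [m Mm ->] pi0m_notin.
exists (m - beta m z *: m1); first by rewrite rpredB ?rpredZ.
split; first by rewrite (betaBl beta_bilin) (betaZl beta_bilin) m1z mulr1 subrr.
apply: contra pi0m_notin; rewrite linearB linearZ /= => line_m.
by rewrite -(subrK (beta m z *: pi0 m1) (pi0 m)) rpredD // rpredZ // memv_line.
Qed.

Lemma lift_pair b1 b2 w : \dim (pi0 @: M) = 2 -> w \in [:: e 0%N; f 0%N] ->
    b1 \in M -> b2 \in M -> beta b1 z = 1 -> beta b2 z = 0 -> beta b1 w = 0 -> beta b2 w = 1 ->
  exists b u : nat -> V,
    [/\ basis_of M [seq b i | i <- iota 1 d], forall i, u i \in U,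
        b 1%N = pi0 b1 + u 1%N, b 2%N = pi0 b2 + u 2%N
      & forall i, (3 <= i <= d)%N -> b i = u i].
Proof.
move=> dimP2 w_e0f0 Mb1 Mb2 b1z b2z b1w b2w.
have ze0f0_w : w \in [:: z; e 0%N; f 0%N] by rewrite inE w_e0f0 orbT.
have [] := @lift_basis [:: b1; b2].
- by rewrite /= Mb1 Mb2.
- apply: (dual_free beta_bilin (Y := [:: z; w])) => // [[|[|i]]] [|[|j]] //= _ _;
    by rewrite beta_pi0 ?mem_head.
- by rewrite dimP2.
move=> b [u [basis_b Uu b_ker b_lift]].
by exists b, u; split; rewrite ?b_lift.
Qed.

Lemma normal_form_iii m1 m2 : \dim (pi0 @: M) = 2 -> m1 \in M -> m2 \in M ->
    beta m1 z = 1 -> beta m2 z = 0 -> beta m2 (f 0%N) = 0 -> beta m2 (e 0%N) != 0 ->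
  exists b u, normal_form_basis b u.
Proof.
move=> dimP2 Mm1 Mm2 m1z m2z m2f0 m2e0.
have bZl := betaZl beta_bilin; have bBl := betaBl beta_bilin.
pose b2 := (beta m2 (e 0%N))^-1 *: m2.
have [Mb2 b2z b2e b2f] : [/\ b2 \in M, beta b2 z = 0, beta b2 (e 0%N) = 1 & beta b2 (f 0%N) = 0].
  by rewrite rpredZ // !bZl m2z m2f0 mulVf // !mulr0.
clearbody b2; pose b1 := m1 - beta m1 (e 0%N) *: b2.
have [Mb1 b1z b1e] : [/\ b1 \in M, beta b1 z = 1 & beta b1 (e 0%N) = 0].
  by rewrite rpredB ?rpredZ // !bBl !bZl b2z b2e mulr0 subr0 mulr1 subrr.
clearbody b1.
have e0_in : e 0%N \in [:: e 0%N; f 0%N] := mem_head _ _.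
have [b [u [basis_b Uu b1E b2E b_ker]]] := lift_pair dimP2 e0_in Mb1 Mb2 b1z b2z b1e b2e.
exists b, u; split => //; split => [i _|]; first exact: Uu.
apply: Or33; exists (beta b1 (f 0%N)); split => //.
- by rewrite b1E pi0E b1z b1e scale1r scale0r addr0.
- by rewrite b2E pi0E b2z b2e b2f !scale0r scale1r !add0r.
Qed.

Lemma normal_form_ii m1 m2 : \dim (pi0 @: M) = 2 -> m1 \in M -> m2 \in M ->
    beta m1 z = 1 -> beta m2 z = 0 -> beta m2 (f 0%N) != 0 ->
  exists b u, normal_form_basis b u.
Proof.
move=> dimP2 Mm1 Mm2 m1z m2z m2f0.
have bZl := betaZl beta_bilin; have bBl := betaBl beta_bilin.
pose b2 := (beta m2 (f 0%N))^-1 *: m2.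
have [Mb2 b2z b2f] : [/\ b2 \in M, beta b2 z = 0 & beta b2 (f 0%N) = 1].
  by rewrite rpredZ // !bZl m2z mulVf // mulr0.
clearbody b2; pose b1 := m1 - beta m1 (f 0%N) *: b2.
have [Mb1 b1z b1f] : [/\ b1 \in M, beta b1 z = 1 & beta b1 (f 0%N) = 0].
  by rewrite rpredB ?rpredZ // !bBl !bZl b2z b2f mulr0 subr0 mulr1 subrr.
clearbody b1.
have f0_in : f 0%N \in [:: e 0%N; f 0%N] by rewrite !inE eqxx orbT.
have [b [u [basis_b Uu b1E b2E b_ker]]] := lift_pair dimP2 f0_in Mb1 Mb2 b1z b2z b1f b2f.
exists b, u; split => //; split => [i _|]; first exact: Uu.
apply: Or32; exists (beta b1 (e 0%N)), (beta b2 (e 0%N)); split => //.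
- by rewrite b1E pi0E b1z b1f scale1r scale0r addr0.
- by rewrite b2E pi0E b2z b2f scale0r add0r scale1r.
Qed.

Lemma normal_form_dim2 : \dim (pi0 @: M) = 2 -> exists b u, normal_form_basis b u.
Proof.
move=> dimP2.
have [m1 Mm1 m1z] := exists_beta_z1.
have [m2 Mm2 [m2z pi0m2_notin]] := exists_pi0_notin_line dimP2 Mm1 m1z.
have [m2f0 | m2f0] := eqVneq (beta m2 (f 0%N)) 0; last exact: (normal_form_ii dimP2 Mm1 Mm2).
apply: (normal_form_iii dimP2 Mm1 Mm2) => //.
apply: contra pi0m2_notin => /eqP m2e0.
by rewrite pi0E m2z m2f0 m2e0 !scale0r !addr0 mem0v.
Qed.

Lemma exists_normal_form_basis : exists b u, normal_form_basis b u.
Proof.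
have /andP [dimP_ge2 dimP_le3] := dim_img_pi0_M.
have [dimP3 | dimP2] : \dim (pi0 @: M) = 3 \/ \dim (pi0 @: M) = 2 by lia.
  exact: normal_form_dim3.
exact: normal_form_dim2.
Qed.

End NormalForm.

Unset Implicit Arguments.

Theorem lemma3p8 (F : finFieldType) (V : vectType F) (beta : V -> V -> F)
  (d : nat) (z x y : V) (e f : nat -> V) (M : {vspace V}) :
  odd #|F| -> (2 <= d)%N ->
  qf_bilin_form beta -> qf_symm_form beta -> qf_nondegenerate beta ->
  basis_of fullv (qf_full_basis z x y e f d) ->
  (forall i j, (i < size (qf_blocks z x y e f d))%N ->
     (j < size (qf_blocks z x y e f d))%N -> i != j ->
     qf_orth beta (nth 0%VS (qf_blocks z x y e f d) i) (nth 0%VS (qf_blocks z x y e f d) j)) ->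
  beta z z = 1 ->
  (forall i, (i <= d - 2)%N ->
     [/\ beta (e i) (f i) = 1, beta (e i) (e i) = 0 & beta (f i) (f i) = 0]) ->
  qf_anisotropic beta <<[:: x; y]>>%VS ->
  qf_totally_singular beta M -> \dim M = d ->
  exists (b u : nat -> V),
    basis_of M [seq b i | i <- iota 1 d] /\
    (forall i, (1 <= i <= d)%N -> u i \in qf_Usp x y e f d) /\
    [\/ [/\ (3 <= d)%N, b 1%N = z + u 1%N, b 2%N = e 0%N + u 2%N,
            b 3%N = f 0%N + u 3%N &
            forall i, (4 <= i <= d)%N -> b i = u i],
        exists lam mu : F,
          [/\ b 1%N = z + lam *: f 0%N + u 1%N,
              b 2%N = e 0%N + mu *: f 0%N + u 2%N &
              forall i, (3 <= i <= d)%N -> b i = u i]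
      | exists lam : F,
          [/\ b 1%N = z + lam *: e 0%N + u 1%N,
              b 2%N = f 0%N + u 2%N &
              forall i, (3 <= i <= d)%N -> b i = u i]].
Proof.
move=> oddF d_ge2 bil sym _ full_basis blocks_orth zz1 hyp_ef aniso_xy singM dimM.
have isoM := totally_singular_isotropic bil sym (odd_card_two_neq0 oddF) singM.
exact: (exists_normal_form_basis bil sym d_ge2 full_basis blocks_orth zz1 hyp_ef aniso_xy
          isoM dimM).
Qed.
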